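(* Let $\mathcal{K}$ be an $N$-dimensional asymptotic class (for some positive integer $N$) of finite trees, viewed as $\mathcal{L}_t$-structures, containing arbitrarily large finite members. Then there is $H<\omega$ such that every $A\in\mathcal{K}$ has height at most $H$.
   Context: Trees: the language $\mathcal{L}_t$ has a binary relation $\le$, a constant $\varepsilon$, a binary function $\sqcap$ and a unary function $\mathtt{pred}$. A tree is an $\mathcal{L}_t$-structure in which $\le$ is a partial order with every downset $\{a:a\le b\}$ well-ordered, $\varepsilon$ is the least element, $a\sqcap a'$ is the greatest common lower bound of $a,a'$, $\mathtt{pred}(a)$ is the greatest element strictly below $a$ for $a\ne\varepsilon$, and $\mathtt{pred}(\varepsilon)=\varepsilon$. The height of an element $a$ is the least $k$ with $\mathtt{pred}^k(a)=\varepsilon$, and the height of a finite tree is the maximum height of its elements. Asymptotic classes: for a positive integer $N$, a class $\mathcal{K}$ of finite $\mathcal{L}$-structures is an $N$-dimensional asymptotic class if for every $\mathcal{L}$-formula $\varphi(x,\bar y)$ with $|\bar y|=m$ there is a finite set of triples $(d_i,\mu_i,\theta_i(\bar y))$, $i<k$, with $d_i\in\{0,\frac1N,\dots,1\}$, $\mu_i\in[0,\infty)$ (with $\mu_i>0$ unless $d_i=0$), and $\theta_i$ $\mathcal{L}$-formulas, such that: (i) the $\theta_i$ partition $A^m$ in every $A\in\mathcal{K}$; (ii) for each $i$ and $\epsilon>0$ there is $M$ such that for all $A\in\mathcal{K}$ with $|A|\ge M$ and $\bar b\in A^m$ with $A\models\theta_i(\bar b)$, $\big||\varphi(A,\bar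 b)|-\mu_i|A|^{d_i}\big|\le\epsilon|A|^{d_i}$. *)

From Stdlib Require Import Reals.
From mathcomp Require Import all_boot.

Set Implicit Arguments.
Unset Strict Implicit.
Unset Printing Implicit Defensive.

Record Lt_struct := LtStruct {
  carrier :> finType;
  tle : rel carrier;
  teps : carrier;
  tmeet : carrier -> carrier -> carrier;
  tpred : carrier -> carrier
}.

Definition is_tree (A : Lt_struct) : Prop :=
  (forall a : A, tle a a) /\
  (forall a b : A, tle a b -> tle b a -> a = b) /\
  (forall a b c : A, tle a b -> tle b c -> tle a c) /\
  (forall b : A,
     (forall a a' : A, tle a b -> tle a' b -> tle a a' \/ tle a' a) /\
     (forall S : {set A}, (forall a, a \in S -> tle a b) -> S != set0 ->
        exists2 a, a \in S & forall a', a' \in S -> tle a a')) /\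
  (forall a : A, tle (teps A) a) /\
  (forall a a' : A, tle (tmeet a a') a /\ tle (tmeet a a') a' /\
     forall c : A, tle c a -> tle c a' -> tle c (tmeet a a')) /\
  (forall a : A, a <> teps A ->
     (tle (tpred a) a /\ tpred a <> a) /\
     forall c : A, tle c a -> c <> a -> tle c (tpred a)) /\
  tpred (teps A) = teps A.

Definition is_height (A : Lt_struct) (a : A) (h : nat) : Prop :=
  iter h (@tpred A) a = teps A /\
  forall k, k < h -> iter k (@tpred A) a <> teps A.

Definition tree_height_le (A : Lt_struct) (H : nat) : Prop :=
  forall a : A, exists h, is_height a h /\ h <= H.

Inductive term (n : nat) : Type :=
  | TVar of 'I_n
  | TEps
  | TMeet of term n & term n
  | TPred of term n.

Inductive formula : nat -> Type :=
  | FEq n : term n -> term n -> formula n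
  | FLe n : term n -> term n -> formula n
  | FNot n : formula n -> formula n
  | FAnd n : formula n -> formula n -> formula n
  | FOr n : formula n -> formula n -> formula n
  | FEx n : formula n.+1 -> formula n
  | FAll n : formula n.+1 -> formula n.

Definition scons (T : Type) (n : nat) (a : T) (e : 'I_n -> T) : 'I_n.+1 -> T :=
  fun i => match unlift ord0 i with Some j => e j | None => a end.

Fixpoint teval (A : Lt_struct) (n : nat) (e : 'I_n -> A) (t : term n) : A :=
  match t with
  | TVar i => e i
  | TEps => teps A
  | TMeet t1 t2 => tmeet (teval e t1) (teval e t2)
  | TPred t1 => tpred (teval e t1)
  end.

(* satisfaction A |= f[e]; boolean since A is finite *)
Fixpoint sat (A : Lt_struct) (n : nat) (f : formula n) : ('I_n -> A) -> bool :=
  match f in formula n return ('I_n -> A) -> bool with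
  | FEq _ t1 t2 => fun e => teval e t1 == teval e t2
  | FLe _ t1 t2 => fun e => tle (teval e t1) (teval e t2)
  | FNot _ g => fun e => ~~ sat g e
  | FAnd _ g h => fun e => sat g e && sat h e
  | FOr _ g h => fun e => sat g e || sat h e
  | FEx _ g => fun e => [exists a : A, sat g (scons a e)]
  | FAll _ g => fun e => [forall a : A, sat g (scons a e)]
  end.

(* For phi(x, y) with x the variable 0 and y = (y_1..y_m):
   |phi(A, b)| = #{a in A | A |= phi(a, b)} *)
Definition def_card (A : Lt_struct) (m : nat) (phi : formula m.+1)
  (b : 'I_m -> A) : nat := #|[pred a : A | sat phi (scons a b)]|.

(* The dimension d_i in {0, 1/N, ..., 1} is encoded as (d i)/N with
   d i <= N. *)
Definition asymptotic_class (N : nat) (K : Lt_struct -> Prop) : Prop :=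
  forall (m : nat) (phi : formula m.+1),
  exists (k : nat) (d : 'I_k -> nat) (mu : 'I_k -> R) (theta : 'I_k -> formula m),
    (forall i, d i <= N) /\
    (forall i, Rle 0 (mu i)) /\
    (forall i, d i <> 0 -> Rlt 0 (mu i)) /\
    (forall A, K A -> forall b : 'I_m -> A, exists! i, sat (theta i) b) /\
    (forall i (eps : R), Rlt 0 eps ->
       exists M : nat, forall A, K A -> M <= #|A| ->
         forall b : 'I_m -> A, sat (theta i) b ->
           Rle (Rabs (Rminus (INR (def_card phi b))
                        (Rmult (mu i) (Rpower (INR #|A|) (Rdiv (INR (d i)) (INR N))))))
               (Rmult eps (Rpower (INR #|A|) (Rdiv (INR (d i)) (INR N))))).

From Stdlib Require Import Reals Lra.
From mathcomp Require Import all_boot.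

Set Implicit Arguments.
Unset Strict Implicit.
Unset Printing Implicit Defensive.

(* The proof uses the single formula  phi(x, y) := x <= y, whose solution set
   in a tree A with parameter b is the downset of b; its size, the depth of b,
   is the height of b plus one.

   1. A general fact about asymptotic classes (asymptotic_separation): for any
      formula phi there are finitely many parameter classes theta_i and a
      threshold c such that, in all large enough structures, two parameters of
      the same class cannot have counts >= c differing by a factor >= 3.  In
      dimension 0 the count stays below mu + 1; in positive dimension every
      count of the class is within 1/3 of mu |A|^d.
   2. In a tree every depth between 1 and the depth of a is the depth of an
      ancestor of a.  So an element of depth >= (c+1) 3^k has ancestors of depths
      (c+1) 3^j for j = 0..k, and two of these k+1 ancestors fall in the same
      of the k classes (scales_collide), contradicting 1. *)

Section RealEstimates.
Local Open Scope R_scope.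

Lemma no_factor_three_in_window (mu s t t' : R) :
  0 < mu -> 0 < s ->
  Rabs (t - mu * s) <= mu / 3 * s -> Rabs (t' - mu * s) <= mu / 3 * s ->
  3 * t <= t' -> False.
Proof.
move=> hmu hs ht ht' h3.
have hx : 0 < mu * s by apply: Rmult_lt_0_compat.
have e : mu / 3 * s = mu * s / 3 by field.
rewrite e in ht ht'.
move: (mu * s) hx ht ht' => x hx ht ht'; split_Rabs; lra.
Qed.

(* The approximation error allowed for class i: 1 in dimension 0 (where mu
   may vanish), and a third of the main term in positive dimension. *)
Definition class_error (d : nat) (mu : R) : R := if d == 0%N then 1 else mu / 3.

End RealEstimates.

Lemma asymptotic_separation (N : nat) (K : Lt_struct -> Prop) (m : nat)
    (phi : formula m.+1) :
  asymptotic_class N K ->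
  exists (k : nat) (theta : 'I_k -> formula m),
    (forall A, K A -> forall b : 'I_m -> A, exists i, sat (theta i) b) /\
    exists M c : nat, forall A, K A -> M <= #|A| ->
      forall i (b b' : 'I_m -> A), sat (theta i) b -> sat (theta i) b' ->
      c <= def_card phi b -> 3 * def_card phi b <= def_card phi b' -> False.
Proof.
move=> hK.
have [k [d [mu [theta [_ [_ [hmu [hpart happrox]]]]]]]] := hK m phi.
exists k, theta; split.
  by move=> A KA b; have [i [hi _]] := hpart A KA b; exists i.
have [Mf hMf] := fin_all_exists (fun i => happrox i (class_error (d i) (mu i))
  ltac:(rewrite /class_error; case: eqP => [_|/hmu]; lra)).
have [cf hcf] := fin_all_exists (fun i => INR_unbounded (Rplus (mu i) 1)).
exists (\max_i Mf i), (\max_i cf i) => A KA hM i b b' hb hb' hc h3.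
have hMi : Mf i <= #|A| := leq_trans (leq_bigmax i) hM.
have := hMf i A KA hMi b hb; have := hMf i A KA hMi b' hb'.
rewrite /class_error; case: eqP => [hd _|hd].
- (* dimension 0: the count is at most mu + 1 < c *)
  rewrite hd /Rdiv Rmult_0_l /Rpower Rmult_0_l exp_0 !Rmult_1_r => hb_approx.
  have hcb : Rle (INR (cf i)) (INR (def_card phi b)).
    by apply/le_INR/leP/(leq_trans (leq_bigmax i)).
  have := hcf i; move: hb_approx; split_Rabs; lra.
-
  move=> hb'_approx hb_approx.
  apply: (no_factor_three_in_window (hmu i hd) (exp_pos _) hb_approx hb'_approx).
  by rewrite -(INR_IZR_INZ 3) -mult_INR; apply/le_INR/leP.
Qed.

(* The depth of b: the number of elements below b, i.e. its height plus one. *)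
Definition depth (A : Lt_struct) (b : A) : nat := #|[pred x : A | tle x b]|.

Section TreeDepth.
Variable A : Lt_struct.
Hypothesis treeA : is_tree A.

Lemma tle_refl (a : A) : tle a a.
Proof. by case: treeA. Qed.

Lemma tle_anti (a b : A) : tle a b -> tle b a -> a = b.
Proof. by case: treeA => _ [anti _]; apply: anti. Qed.

Lemma tle_trans (a b c : A) : tle a b -> tle b c -> tle a c.
Proof. by case: treeA => _ [_ [trans _]]; apply: trans. Qed.

Lemma teps_least (a : A) : tle (teps A) a.
Proof. by case: treeA => _ [_ [_ [_ [least _]]]]. Qed.

Lemma tpred_spec (a : A) : a <> teps A ->
  (tle (tpred a) a /\ tpred a <> a) /\
  forall c : A, tle c a -> c <> a -> tle c (tpred a).
Proof. by case: treeA => _ [_ [_ [_ [_ [_ [hpred _]]]]]]; apply: hpred. Qed.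

Lemma depth_pos (b : A) : 0 < depth b.
Proof. by apply/card_gt0P; exists b; rewrite inE /= tle_refl. Qed.

Lemma depth_eps : depth (teps A) = 1.
Proof.
rewrite /depth -(card1 (teps A)); apply: eq_card => x; rewrite !inE.
apply/idP/eqP => [h|->]; [exact: tle_anti h (teps_least x) | exact: tle_refl].
Qed.

(* Below b, the downset of pred b is that of b with b itself removed. *)
Lemma depth_pred (b : A) :
  1 < depth b -> b <> teps A /\ depth (tpred b) = (depth b).-1.
Proof.
move=> h2.
have hb : b <> teps A by move=> e; move: h2; rewrite e depth_eps.
split=> //.
have [[hpb hpn] hmax] := tpred_spec hb.
rewrite /depth [in RHS](cardD1 b) inE /= tle_refl /=.
apply: eq_card => x; rewrite !inE.
apply/idP/andP => [h|[/eqP hn h]]; last exact: hmax.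
split; last exact: tle_trans h hpb.
by apply/eqP => e; subst x; apply: hpn; apply: tle_anti.
Qed.

Lemma depth_attained (b : A) (j : nat) :
  0 < j <= depth b -> exists b' : A, depth b' = j.
Proof.
move=> /andP [hj1]; move hb: (depth b) => n; elim: n b hb => [|n IH] b hb hj.
  by move: (leq_trans hj1 hj).
case: (ltngtP j n.+1) hj => // [hlt _|-> _]; last by exists b.
have [_ hp] : b <> teps A /\ depth (tpred b) = (depth b).-1.
  by apply: depth_pred; rewrite hb ltnS (leq_trans hj1) // -ltnS.
by apply: (IH (tpred b)); rewrite ?hp ?hb // -ltnS.
Qed.

(* The height of a is its depth minus one: a has depth n+1 exactly when a
   chain of n predecessor steps leads from a down to eps. *)
Lemma is_height_depth (a : A) : is_height a (depth a).-1.
Proof.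
move ha: (depth a) => n; elim: n a ha => [|n IH] a ha.
  by move: (depth_pos a); rewrite ha.
case: n IH ha => [_ ha|n IH ha].
- split=> //=.
  apply: tle_anti (teps_least a).
  move: ha; rewrite /depth (cardD1 a) inE /= tle_refl => /eqP.
  rewrite eqSS => /eqP/card0_eq /(_ (teps A)); rewrite !inE teps_least andbT.
  by move/negbT; rewrite negbK => /eqP <-; apply: tle_refl.
- have [hne hp] := depth_pred (ltac:(by rewrite ha) : 1 < depth a).
  have [hiter hbelow] := IH (tpred a) ltac:(by rewrite hp ha).
  split; first by rewrite iterSr.
  by case=> [|k] hk //=; rewrite -iterS iterSr; apply: hbelow.
Qed.

Lemma tree_height_le_depth (H : nat) :
  (forall a : A, depth a <= H) -> tree_height_le A H.
Proof.
move=> hd a; exists (depth a).-1; split; first exact: is_height_depth.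
exact: leq_trans (leq_pred _) (hd a).
Qed.

(* Pigeonhole: if the elements of a tall tree are covered by k classes, some
   class contains two elements of depth >= c whose depths differ by a
   factor >= 3; they are found among the ancestors of depth (c+1) 3^j. *)
Lemma scales_collide (k c : nat) (P : 'I_k -> A -> Prop) (a : A) :
  (forall b, exists i, P i b) -> c.+1 * 3 ^ k <= depth a ->
  exists i (b b' : A), [/\ P i b, P i b', c <= depth b & 3 * depth b <= depth b'].
Proof.
move=> hcover htall.
have ancestors : forall j : 'I_k.+1, exists b : A, depth b = c.+1 * 3 ^ j.
  move=> j; apply: (depth_attained (b := a)).
  rewrite muln_gt0 expn_gt0 /=; apply: leq_trans htall.
  by rewrite leq_mul2l leq_pexp2l // -ltnS.
have [bf hbf] := fin_all_exists ancestors.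
have [g hg] := fin_all_exists (fun j => hcover (bf j)).
have /injectivePn [j [j' hjj' hgj]] : ~~ injectiveb g.
  by apply/injectiveP => /leq_card; rewrite !card_ord ltnn.
wlog hlt : j j' hjj' hgj / j < j'.
  move=> hwlog; have [h|h|/val_inj h] := ltngtP j j'.
  - exact: (hwlog j j').
  - by apply: (hwlog j' j); rewrite // eq_sym.
  - by move: hjj'; rewrite h eqxx.
exists (g j), (bf j), (bf j'); rewrite !hbf; split=> //; first by rewrite hgj.
  by rewrite (leq_trans (leqnSn c)) // leq_pmulr // expn_gt0.
by rewrite mulnCA -expnS leq_mul2l leq_pexp2l.
Qed.

End TreeDepth.

Definition below_formula : formula 2 :=
  FLe (TVar (ord0 : 'I_2)) (TVar (ord_max : 'I_2)).

Lemma def_card_below (A : Lt_struct) (b : A) :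
  def_card below_formula (fun _ => b) = depth b.
Proof.
rewrite /def_card /depth; apply: eq_card => x; rewrite !inE /=.
by rewrite /scons /= unlift_none; case: unliftP.
Qed.

Theorem mainTheorem16 (N : nat) (K : Lt_struct -> Prop) :
  0 < N ->
  (forall A, K A -> is_tree A) ->
  asymptotic_class N K ->
  (forall n : nat, exists A, K A /\ n <= #|A|) ->
  exists H : nat, forall A, K A -> tree_height_le A H.
Proof.
move=> _ htree hK _.
have [k [theta [hcover [M [c hsep]]]]] := asymptotic_separation below_formula hK.
exists (maxn M (c.+1 * 3 ^ k)) => A KA.
apply: (tree_height_le_depth (htree A KA)) => a.
rewrite leqNgt; apply/negP; rewrite gtn_max => /andP [hM htall].
have [i [b [b' [hb hb' hc h3]]]] :=
  scales_collide (htree A KA) (P := fun i b => sat (theta i) (fun _ => b))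
    (fun b => hcover A KA (fun _ => b)) (ltnW htall).
apply: (hsep A KA _ i _ _ hb hb'); rewrite ?def_card_below //.
exact: leq_trans (ltnW hM) (max_card _).
Qed.
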